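(* Consider the family of discrete-time load balancing systems described in the context under a throughput optimal Markovian policy, and assume $(\sigma_\Sigma^{(\epsilon)})^2\to\sigma_\Sigma^2$ as $\epsilon\downarrow0$. Then the policy is heavy-traffic delay optimal in steady state (i.e. $\limsup_{\epsilon\downarrow0}\epsilon\,\mathbb{E}[\sum_{n=1}^N\overline{Q}^{(\epsilon)}_n]\le\zeta/2$ with $\zeta=\sigma_\Sigma^2+\nu_\Sigma^2$) if and only if $$\lim_{\epsilon\downarrow0}\mathbb{E}\big[\|\overline{\mathbf{Q}}^{(\epsilon)}(t+1)\|_1\,\|\overline{\mathbf{U}}^{(\epsilon)}(t)\|_1\big]=0 .$$
   Context: Model: a discrete-time system with one dispatcher and $N$ servers; server $n$ has an infinite-buffer FIFO queue of length $Q_n(t)$ at the beginning of slot $t$. Arrivals $A_\Sigma(t)$: integer valued, i.i.d. over $t$, mean $\lambda_\Sigma$, variance $\sigma_\Sigma^2$, $\mathbb{P}(A_\Sigma(t)=0)>0$, $A_\Sigma(t)\le A_{\max}<\infty$. Service $S_n(t)$: integer valued, i.i.d. over $t$, independent across servers and of arrivals, $S_n(t)\le S_{\max}<\infty$, mean $\mu_n$, variance $\nu_n^2$; $\mu_\Sigma=\sum_n\mu_n$, $\nu^2_\Sigma=\sum_n\nu_n^2$. In each slot the arrivals are routed to one queue by a rule depending only on $\mathbf{Q}(t)$; $A_n(t)$ is the number routed to queue $n$. Dynamics: $Q_n(t+1)=Q_n(t)+A_n(t)-S_n(t)+U_n(t)$, $U_n(t)=\max\{S_n(t)-Q_n(t)-A_n(t),0\}$.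 Family indexed by $\epsilon>0$: arrivals $A_\Sigma^{(\epsilon)}(t)$ with mean $\mu_\Sigma-\epsilon$ and variance $(\sigma^{(\epsilon)}_\Sigma)^2$. Throughput optimal: for every $\epsilon>0$ the chain $\{\mathbf{Q}(t)\}$ is positive recurrent and all moments of the stationary $\|\overline{\mathbf{Q}}^{(\epsilon)}\|$ are finite. In the displayed expectation, $\overline{\mathbf{Q}}^{(\epsilon)}(t)$ is distributed according to the stationary distribution, $\overline{\mathbf{U}}^{(\epsilon)}(t)$ is the unused service in slot $t$, and $\overline{\mathbf{Q}}^{(\epsilon)}(t+1)$ is the resulting next state. $\|\mathbf{x}\|_1=\sum_n|x_n|$. *)

From HB Require Import structures.
From mathcomp Require Import all_boot all_order all_algebra.
From mathcomp Require Import all_classical all_reals all_analysis.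
Import Order.TTheory GRing.Theory Num.Theory.
Import numFieldNormedType.Exports.

Set Implicit Arguments.
Unset Strict Implicit.
Unset Printing Implicit Defensive.

Local Open Scope classical_set_scope.
Local Open Scope ring_scope.

Definition state (N : nat) := {ffun 'I_N -> nat}.

Section LoadBalancing.
Variable R : realType.

Definition is_pmf (M : nat) (p : nat -> R) : Prop :=
  [/\ (forall k, 0 <= p k), (forall k, (M < k)%N -> p k = 0)
    & \sum_(k < M.+1) p k = 1].

Definition pmean (M : nat) (p : nat -> R) : R := \sum_(k < M.+1) k%:R * p k.
Definition pvar (M : nat) (p : nat -> R) : R :=
  \sum_(k < M.+1) (k%:R - pmean M p) ^+ 2 * p k.

Variables (N Amax Smax : nat).

Definition mu_sum (S : 'I_N -> nat -> R) : R := \sum_(n < N) pmean Smax (S n).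
Definition nu2_sum (S : 'I_N -> nat -> R) : R := \sum_(n < N) pvar Smax (S n).

(* A Markovian routing policy: given Q(t), the probability route Q n that the
   arrivals of slot t are all sent to queue n (deterministic rules are the
   special case of 0/1 probabilities). *)
Definition valid_routing (route : state N -> 'I_N -> R) : Prop :=
  forall Q, (forall n, 0 <= route Q n) /\ \sum_(n < N) route Q n = 1.

Definition routed (a : nat) (n m : 'I_N) : nat := if m == n then a else 0%N.

(* U_m(t) = max {S_m(t) - Q_m(t) - A_m(t), 0} *)
Definition unused (Q : state N) (a : nat) (n : 'I_N) (s : 'I_N -> nat)
  (m : 'I_N) : nat := (s m - (Q m + routed a n m))%N.

(* Q_m(t+1) = Q_m(t) + A_m(t) - S_m(t) + U_m(t) (always >= 0) *)
Definition next_state (Q : state N) (a : nat) (n : 'I_N) (s : 'I_N -> nat)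
  : state N := [ffun m => (Q m + routed a n m + unused Q a n s m - s m)%N].

(* Expectation over one slot, starting from state Q, of g(A_Sigma, routed
   queue, service vector), with arrival pmf A and service pmfs S. *)
Definition step_exp (A : nat -> R) (S : 'I_N -> nat -> R)
  (route : state N -> 'I_N -> R) (Q : state N)
  (g : nat -> 'I_N -> ('I_N -> nat) -> R) : R :=
  \sum_(a < Amax.+1) A a * \sum_(n < N) route Q n *
    \sum_(s : {ffun 'I_N -> 'I_Smax.+1})
       (\prod_(m < N) S m (s m)) * g a n (fun m => nat_of_ord (s m)).

Definition trans (A : nat -> R) (S : 'I_N -> nat -> R)
  (route : state N -> 'I_N -> R) (Q Q' : state N) : R :=
  step_exp A S route Q (fun a n s => (next_state Q a n s == Q')%:R).

Definition l1 (Q : state N) : nat := \sum_(m < N) Q m.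

Definition stationary (A : nat -> R) (S : 'I_N -> nat -> R)
  (route : state N -> 'I_N -> R) (pi : state N -> R) : Prop :=
  [/\ (forall Q, 0 <= pi Q),
      (\esum_(Q in [set: state N]) (pi Q)%:E = 1)%E
    & forall Q', ((pi Q')%:E =
        \esum_(Q in [set: state N]) (pi Q * trans A S route Q Q')%:E)%E].

Definition finite_moments (pi : state N -> R) : Prop :=
  forall k : nat,
    (\esum_(Q in [set: state N]) (pi Q * (l1 Q)%:R ^+ k)%:E < +oo)%E.

Definition mean_total (pi : state N -> R) : \bar R :=
  \esum_(Q in [set: state N]) (pi Q * (l1 Q)%:R)%:E.

Definition mean_QU (A : nat -> R) (S : 'I_N -> nat -> R)
  (route : state N -> 'I_N -> R) (pi : state N -> R) : \bar R :=
  \esum_(Q in [set: state N])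
    (pi Q * step_exp A S route Q (fun a n s =>
        (l1 (next_state Q a n s))%:R *
        (\sum_(m < N) unused Q a n s m)%:R))%:E.

End LoadBalancing.

(* Write q = ||Q(t)||_1, q' = ||Q(t+1)||_1, u = ||U(t)||_1, a = A_Sigma(t) and
   s = sum_n S_n(t).  Conservation of jobs gives q' = q + a - s + u.  In steady
   state (all moments being finite) E[q'] = E[q] and E[q'^2] = E[q^2], so the
   first moment of the identity yields E[u] = eps and its square, written as
   q'^2 = (q + a - s)^2 + 2 q' u - u^2, yields
     eps E[q] = (sigma_eps^2 + nu_Sigma^2) / 2 + (eps^2 - E[u^2]) / 2 + E[q' u].
   Since 0 <= u <= N S_max, 0 <= E[u^2] <= N S_max eps, hence
   eps E[q] - E[q' u] -> zeta / 2, and as E[q' u] >= 0 the limsup of eps E[q]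
   is at most zeta / 2 exactly when E[q' u] -> 0. *)

From HB Require Import structures.
From mathcomp Require Import all_boot all_order all_algebra.
From mathcomp Require Import all_classical all_reals all_analysis.
From mathcomp Require Import ring lra zify.
Import Order.TTheory GRing.Theory Num.Theory.
Import numFieldNormedType.Exports.

Set Implicit Arguments.
Unset Strict Implicit.
Unset Printing Implicit Defensive.

Local Open Scope classical_set_scope.
Local Open Scope ring_scope.

Section EsumFacts.
Variables (R : realType) (T : choiceType).
Local Open Scope ereal_scope.

Lemma ge0_esumZl (D : set T) (a : T -> \bar R) (c : R) : (0 <= c)%R ->
  (forall i, 0 <= a i) ->
  \esum_(i in D) (c%:E * a i) = c%:E * \esum_(i in D) a i.
Proof.
move=> c0 a0; rewrite /esum -ereal_supZl//; last first.
  by apply/set0P; exists 0; exists set0; [exact: fsets_set0|rewrite fsbig_set0].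
congr ereal_sup; rewrite image_comp; apply: eq_imagel => F _ /=.
by rewrite ge0_mule_fsumr.
Qed.

Lemma exchange_esum (T' : choiceType) (a : T -> T' -> \bar R) :
  (forall i j, 0 <= a i j) ->
  \esum_(i in [set: T]) \esum_(j in [set: T']) a i j =
  \esum_(j in [set: T']) \esum_(i in [set: T]) a i j.
Proof.
move=> a0; rewrite !esum_esum//.
rewrite (reindex_esum ([set: T'] `*`` (fun=> [set: T]))
  ([set: T] `*`` (fun=> [set: T'])) (fun x => (x.2, x.1))) //.
split=> //= [[x1 x2] [y1 y2] _ _ /= [-> ->]//|[x1 x2] _].
by exists (x2, x1).
Qed.

Lemma esum_delta (y : T) (F : T -> R) : (0 <= F y)%R ->
  \esum_(x in [set: T]) (F x * (y == x)%:R)%:E = (F y)%:E.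
Proof.
move=> Fy0; rewrite (esumID [set y]); last first.
  by move=> x _; case: eqP => [<-|_]; rewrite ?mulr1 ?mulr0 ?lee_fin.
rewrite setTI esum_set1 ?eqxx ?mulr1 ?lee_fin// [X in _ + X]esum1 ?adde0//.
by move=> x [_ /eqP]; rewrite eq_sym => /negbTE ->; rewrite mulr0.
Qed.

Lemma esum_finite_mixture (I : finType) (w : I -> R) (y : I -> T) (f : T -> R) :
  (forall i, 0 <= w i)%R -> (forall x, 0 <= f x)%R ->
  \esum_(x in [set: T]) ((\sum_i w i * (y i == x)%:R) * f x)%:E =
  (\sum_i w i * f (y i))%:E.
Proof.
move=> w0 f0; under eq_esum do rewrite mulr_suml -sumEFin.
rewrite esum_sum; last by move=> x i _ _; rewrite lee_fin !mulr_ge0.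
rewrite -sumEFin; apply: eq_bigr => i _.
under eq_esum do rewrite mulrAC.
by rewrite (@esum_delta (y i) (fun x => w i * f x)%R) // mulr_ge0.
Qed.

End EsumFacts.

Section PmfMoments.
Variable R : realType.

Lemma pvarE M (p : nat -> R) : is_pmf M p ->
  pvar M p = \sum_(k < M.+1) k%:R ^+ 2 * p k - pmean M p ^+ 2.
Proof.
case=> _ _ p1; rewrite /pvar.
have expand x : \sum_(k < M.+1) (k%:R - x) ^+ 2 * p k =
  \sum_(k < M.+1) k%:R ^+ 2 * p k - 2 * x * \sum_(k < M.+1) k%:R * p k
  + x ^+ 2 * \sum_(k < M.+1) p k.
  by rewrite !mulr_sumr -sumrB -big_split; apply: eq_bigr => k _ /=; ring.
by rewrite expand p1 -/(pmean M p); ring.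
Qed.

Lemma pvar_ge0 M (p : nat -> R) : is_pmf M p -> 0 <= pvar M p.
Proof. by case=> p0 _ _; apply: sumr_ge0 => k _; rewrite mulr_ge0 ?sqr_ge0. Qed.

End PmfMoments.

Section Dynamics.
Variables (R : realType) (N Amax Smax : nat).
Variables (A : nat -> R) (S : 'I_N -> nat -> R) (route : state N -> 'I_N -> R).

Local Notation service := {ffun 'I_N -> 'I_Smax.+1}.
Local Notation SE := (step_exp Amax Smax A S route).
Local Notation mA := (pmean Amax A).
Local Notation mS := (mu_sum Smax S).

Definition pservice (s : service) : R := \prod_(m < N) S m (s m).

Definition outcome := ('I_Amax.+1 * ('I_N * service))%type.

Definition poutcome (Q : state N) (x : outcome) : R :=
  A x.1 * route Q x.2.1 * pservice x.2.2.

Definition served (s : 'I_N -> nat) : R := (\sum_(m < N) s m)%:R.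

Definition l1_next (Q : state N) a n s : R := (l1 (next_state Q a n s))%:R.

Definition unused_total (Q : state N) a n s : R :=
  (\sum_(m < N) unused Q a n s m)%:R.

Lemma step_expE Q g : SE Q g =
  \sum_(x : outcome) poutcome Q x * g x.1 x.2.1 (fun m => nat_of_ord (x.2.2 m)).
Proof.
rewrite /step_exp -(pair_big xpredT xpredT (fun (a : 'I_Amax.+1) (p : 'I_N * service) =>
  A a * route Q p.1 * pservice p.2 * g a p.1 (fun m => nat_of_ord (p.2 m)))).
apply: eq_bigr => a _; rewrite -(pair_big xpredT xpredT (fun (n : 'I_N) (s : service) =>
  A a * route Q n * pservice s * g a n (fun m => nat_of_ord (s m)))) mulr_sumr.
apply: eq_bigr => n _; rewrite !mulr_sumr; apply: eq_bigr => s _.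
by rewrite !mulrA.
Qed.

Lemma eq_step_exp Q g1 g2 : (forall a n s, g1 a n s = g2 a n s) -> SE Q g1 = SE Q g2.
Proof. by move=> g12; rewrite !step_expE; apply: eq_bigr => x _; rewrite g12. Qed.

Lemma step_expD Q g1 g2 :
  SE Q (fun a n s => g1 a n s + g2 a n s) = SE Q g1 + SE Q g2.
Proof. by rewrite !step_expE -big_split; apply: eq_bigr => x _; rewrite mulrDr. Qed.

Lemma step_expZ Q c g : SE Q (fun a n s => c * g a n s) = c * SE Q g.
Proof. by rewrite !step_expE mulr_sumr; apply: eq_bigr => x _; rewrite mulrCA. Qed.

Hypothesis Apmf : is_pmf Amax A.
Hypothesis Spmf : forall n, is_pmf Smax (S n).
Hypothesis Hroute : valid_routing route.

Lemma poutcome_ge0 Q x : 0 <= poutcome Q x.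
Proof.
case: Apmf => A0 _ _; have [route0 _] := Hroute Q.
by rewrite !mulr_ge0 //; apply: prodr_ge0 => m _; case: (Spmf m).
Qed.

Lemma le_step_exp Q g1 g2 :
  (forall a n (s : service), g1 a n (fun m => nat_of_ord (s m)) <=
                              g2 a n (fun m => nat_of_ord (s m))) ->
  SE Q g1 <= SE Q g2.
Proof.
move=> g12; rewrite !step_expE; apply: ler_sum => x _.
by rewrite ler_wpM2l ?poutcome_ge0.
Qed.

Lemma step_exp_ge0 Q g :
  (forall a n (s : service), 0 <= g a n (fun m => nat_of_ord (s m))) -> 0 <= SE Q g.
Proof.
move=> g0; rewrite step_expE; apply: sumr_ge0 => x _.
by rewrite mulr_ge0 ?poutcome_ge0.
Qed.

Lemma step_exp_indep Q (f : nat -> R) (h : ('I_N -> nat) -> R) :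
  SE Q (fun a n s => f a * h s) =
  (\sum_(a < Amax.+1) A a * f a) *
  (\sum_(s : service) pservice s * h (fun m => nat_of_ord (s m))).
Proof.
have [_ route1] := Hroute Q.
rewrite /step_exp mulr_suml; apply: eq_bigr => a _.
pose H := \sum_(s : service) pservice s * h (fun m => nat_of_ord (s m)).
rewrite (eq_bigr (fun n => route Q n * (f a * H))); last first.
  move=> n _; congr (_ * _); rewrite /H mulr_sumr.
  by apply: eq_bigr => s _; rewrite mulrCA.
by rewrite -mulr_suml route1 mul1r mulrA.
Qed.

Lemma pservice_prod (w : 'I_N -> nat -> R) :
  \sum_(s : service) pservice s * \prod_(m < N) w m (s m) =
  \prod_(m < N) \sum_(j < Smax.+1) S m j * w m j.
Proof. by rewrite bigA_distr_bigA; apply: eq_bigr => s _; rewrite -big_split. Qed.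

Let pmf_sum1 m : \sum_(j < Smax.+1) S m j * 1 = 1.
Proof. by under eq_bigr do rewrite mulr1; case: (Spmf m). Qed.

Lemma pservice_sum1 : \sum_(s : service) pservice s * 1 = 1.
Proof.
transitivity (\prod_(m < N) \sum_(j < Smax.+1) S m j * 1).
  by rewrite -(pservice_prod (fun _ _ => 1)); apply: eq_bigr => s _; rewrite big1.
by apply: big1 => m _; exact: pmf_sum1.
Qed.

Lemma pservice_marginal m0 (g : nat -> R) :
  \sum_(s : service) pservice s * g (s m0) = \sum_(j < Smax.+1) S m0 j * g j.
Proof.
pose w m j := if m == m0 then g j else 1.
have w_out m j : m != m0 -> w m j = 1 by rewrite /w => /negbTE ->.
have prod_w (s : service) : \prod_(m < N) w m (s m) = g (s m0).
  by rewrite (bigD1 m0) //= big1 => [|m /w_out //]; rewrite mulr1 /w eqxx.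
have sum_w m : m != m0 -> \sum_(j < Smax.+1) S m j * w m j = 1.
  by move=> /w_out h; under eq_bigr do rewrite h; exact: pmf_sum1.
under eq_bigr do rewrite -prod_w.
rewrite pservice_prod (bigD1 m0) //= [X in _ * X]big1 ?mulr1; last exact: sum_w.
by rewrite /w eqxx.
Qed.

Lemma pservice_indep m1 m2 (g1 g2 : nat -> R) : m1 != m2 ->
  \sum_(s : service) pservice s * (g1 (s m1) * g2 (s m2)) =
  (\sum_(j < Smax.+1) S m1 j * g1 j) * (\sum_(j < Smax.+1) S m2 j * g2 j).
Proof.
move=> m12; have m21 : m2 != m1 by rewrite eq_sym.
pose w m j := if m == m1 then g1 j else if m == m2 then g2 j else 1.
have w_out m j : (m != m1) && (m != m2) -> w m j = 1.
  by case/andP => /negbTE h1 /negbTE h2; rewrite /w h1 h2.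
have prod_w (s : service) : \prod_(m < N) w m (s m) = g1 (s m1) * g2 (s m2).
  rewrite (bigD1 m1) // (bigD1 m2 m21) /= big1 => [|m /w_out //].
  by rewrite /w eqxx (negbTE m21) eqxx mulr1.
have sum_w m : (m != m1) && (m != m2) -> \sum_(j < Smax.+1) S m j * w m j = 1.
  by move=> /w_out h; under eq_bigr do rewrite h; exact: pmf_sum1.
under eq_bigr do rewrite -prod_w.
rewrite pservice_prod (bigD1 m1) // (bigD1 m2 m21) /= [X in _ * (_ * X)]big1 ?mulr1;
  last exact: sum_w.
by rewrite /w eqxx (negbTE m21) eqxx.
Qed.

Lemma pservice_served :
  \sum_(s : service) pservice s * served (fun m => s m) = mS.
Proof.
under eq_bigr do rewrite /served natr_sum mulr_sumr.
rewrite exchange_big; apply: eq_bigr => m _.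
rewrite (pservice_marginal m (fun j => j%:R)).
by apply: eq_bigr => j _; rewrite mulrC.
Qed.

Lemma pservice_served_sq :
  \sum_(s : service) pservice s * served (fun m => s m) ^+ 2 =
  nu2_sum Smax S + mS ^+ 2.
Proof.
pose mu m := pmean Smax (S m).
have pair m1 m2 : \sum_(s : service) pservice s * ((s m1)%:R * (s m2)%:R) =
    mu m1 * mu m2 + (m1 == m2)%:R * pvar Smax (S m1).
  have [<-|m12] := eqVneq.
    rewrite mul1r (pvarE (Spmf m1)) (pservice_marginal m1 (fun j => j%:R * j%:R)).
    have -> : \sum_(k < Smax.+1) k%:R ^+ 2 * S m1 k =
              \sum_(j < Smax.+1) S m1 j * (j%:R * j%:R).
      by apply: eq_bigr => j _; rewrite mulrC expr2.
    by rewrite -/(mu m1); ring.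
  rewrite mul0r addr0 (pservice_indep (fun j => j%:R) (fun j => j%:R) m12).
  by congr (_ * _); apply: eq_bigr => j _; rewrite mulrC.
transitivity (\sum_(s : service) \sum_(m1 < N) \sum_(m2 < N)
    pservice s * ((s m1)%:R * (s m2)%:R)).
  apply: eq_bigr => s _; rewrite /served natr_sum expr2 mulr_suml mulr_sumr.
  by apply: eq_bigr => m1 _; rewrite !mulr_sumr.
rewrite exchange_big; under eq_bigr do rewrite exchange_big.
under eq_bigr do under eq_bigr do rewrite pair.
under eq_bigr do rewrite big_split /=.
rewrite big_split /= addrC; congr (_ + _).
  apply: eq_bigr => m1 _; rewrite (bigD1 m1) //= eqxx mul1r big1 ?addr0 //.
  by move=> m2; rewrite eq_sym => /negbTE ->; rewrite mul0r.
by rewrite expr2 mulr_suml; apply: eq_bigr => m1 _; rewrite mulr_sumr.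
Qed.

Lemma step_exp_quadratic Q c0 c1 c2 c3 c4 c5 :
  SE Q (fun a n s => c0 + c1 * a%:R + c2 * served s + c3 * a%:R ^+ 2
                     + c4 * (a%:R * served s) + c5 * served s ^+ 2) =
  c0 + c1 * mA + c2 * mS + c3 * (pvar Amax A + mA ^+ 2)
  + c4 * (mA * mS) + c5 * (nu2_sum Smax S + mS ^+ 2).
Proof.
have indepZ c f h : SE Q (fun a n s => c * (f a * h s)) =
    c * ((\sum_(a < Amax.+1) A a * f a) *
         (\sum_(s : service) pservice s * h (fun m => nat_of_ord (s m)))).
  by rewrite step_expZ step_exp_indep.
have A1 : \sum_(a < Amax.+1) A a * 1 = 1 by under eq_bigr do rewrite mulr1; case: Apmf.
have Amean : \sum_(a < Amax.+1) A a * a%:R = mA.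
  by apply: eq_bigr => a _; rewrite mulrC.
have Asq : \sum_(a < Amax.+1) A a * a%:R ^+ 2 = pvar Amax A + mA ^+ 2.
  by rewrite pvarE // subrK; apply: eq_bigr => a _; rewrite mulrC.
(* Each monomial written as [c * (f a * h s)], so that [indepZ] applies. *)
rewrite (@eq_step_exp Q _ (fun a n s => c0 * (1 * 1) + (c1 * (a%:R * 1) +
  (c2 * (1 * served s) + (c3 * (a%:R ^+ 2 * 1) + (c4 * (a%:R * served s) +
   c5 * (1 * served s ^+ 2))))))); last by move=> *; ring.
rewrite !step_expD !indepZ pservice_sum1 pservice_served pservice_served_sq.
by rewrite A1 Amean Asq; ring.
Qed.

Lemma sum_routed a n : (\sum_(m < N) routed a n m)%N = a.
Proof. by rewrite (bigD1 n) //= /routed eqxx big1 ?addn0 // => m /negbTE ->. Qed.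

Lemma l1_next_state Q a n s :
  (l1 (next_state Q a n s) + \sum_(m < N) s m =
   l1 Q + a + \sum_(m < N) unused Q a n s m)%N.
Proof.
have slot m : (next_state Q a n s m + s m = Q m + routed a n m + unused Q a n s m)%N.
  by rewrite /next_state ffunE /unused; lia.
by rewrite /l1 -big_split (eq_bigr _ (fun m _ => slot m)) !big_split /= sum_routed.
Qed.

Lemma l1_nextE Q a n s :
  l1_next Q a n s = (l1 Q)%:R + a%:R - served s + unused_total Q a n s.
Proof.
have /(congr1 (fun k => k%:R : R)) := l1_next_state Q a n s.
by rewrite /l1_next /served /unused_total !natrD => conserved; lra.
Qed.

Lemma drift_l1 Q :
  SE Q (l1_next Q) + (mS - mA) = (l1 Q)%:R + SE Q (unused_total Q).
Proof.
rewrite (@eq_step_exp Q _ (fun a n s => (l1 Q)%:R + 1 * a%:R + (-1) * served s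
  + 0 * a%:R ^+ 2 + 0 * (a%:R * served s) + 0 * served s ^+ 2
  + unused_total Q a n s)); last by move=> a n s; rewrite l1_nextE; ring.
by rewrite step_expD step_exp_quadratic; ring.
Qed.

Lemma drift_l1_sq Q :
  SE Q (fun a n s => l1_next Q a n s ^+ 2) + 2 * (mS - mA) * (l1 Q)%:R
  + SE Q (fun a n s => unused_total Q a n s ^+ 2) =
  (l1 Q)%:R ^+ 2 + (pvar Amax A + nu2_sum Smax S + (mS - mA) ^+ 2)
  + 2 * SE Q (fun a n s => l1_next Q a n s * unused_total Q a n s).
Proof.
set q : R := (l1 Q)%:R.
(* q'^2 = (q + a - s)^2 + 2 q' u - u^2, expanded *)
rewrite (@eq_step_exp Q _ (fun a n s => q ^+ 2 + (2 * q) * a%:R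
  + (- 2 * q) * served s + 1 * a%:R ^+ 2 + (-2) * (a%:R * served s)
  + 1 * served s ^+ 2
  + (2 * (l1_next Q a n s * unused_total Q a n s)
     + (-1) * unused_total Q a n s ^+ 2))); last first.
  by move=> a n s; rewrite !l1_nextE; ring.
by rewrite step_expD step_exp_quadratic step_expD !step_expZ; ring.
Qed.

Lemma step_exp_unused_sq_le Q :
  SE Q (fun a n s => unused_total Q a n s ^+ 2) <=
  (N * Smax)%:R * SE Q (unused_total Q).
Proof.
rewrite -step_expZ; apply: le_step_exp => a n s.
have u_le : (\sum_(m < N) unused Q a n (fun m => nat_of_ord (s m)) m <= N * Smax)%N.
  rewrite -[X in (_ <= X * _)%N]card_ord -sum_nat_const; apply: leq_sum => m _.
  by rewrite /unused; have := ltn_ord (s m); lia.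
by rewrite expr2 ler_wpM2r ?ler_nat.
Qed.

Section Stationary.
Variable pi : state N -> R.
Hypothesis Hstat : stationary Amax Smax A S route pi.
Local Open Scope ereal_scope.

Definition Epi (h : state N -> R) : \bar R :=
  \esum_(Q in [set: state N]) (pi Q * h Q)%:E.

Let pi_ge0 Q : (0 <= pi Q)%R. Proof. by case: Hstat. Qed.

Lemma Epi_ge0 h : (forall Q, 0 <= h Q)%R -> 0 <= Epi h.
Proof. by move=> h0; apply: esum_ge0 => Q _; rewrite lee_fin mulr_ge0. Qed.

Lemma EpiD h1 h2 : (forall Q, 0 <= h1 Q)%R -> (forall Q, 0 <= h2 Q)%R ->
  Epi (fun Q => h1 Q + h2 Q)%R = Epi h1 + Epi h2.
Proof.
move=> h10 h20; rewrite /Epi -esumD => [|Q _|Q _]; rewrite ?lee_fin ?mulr_ge0 //.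
by apply: eq_esum => Q _; rewrite mulrDr EFinD.
Qed.

Lemma EpiZ c h : (0 <= c)%R -> (forall Q, 0 <= h Q)%R ->
  Epi (fun Q => c * h Q)%R = c%:E * Epi h.
Proof.
move=> c0 h0; rewrite /Epi -ge0_esumZl // => [|Q]; last by rewrite lee_fin mulr_ge0.
by apply: eq_esum => Q _; rewrite -EFinM mulrCA.
Qed.

Lemma Epi_cst c : (0 <= c)%R -> Epi (fun _ => c) = c%:E.
Proof.
case: Hstat => _ pi1 _ c0; rewrite -[c%:E]mule1 -pi1 -ge0_esumZl //.
by apply: eq_esum => Q _; rewrite -EFinM mulrC.
Qed.

Lemma Epi_cstD c h : (0 <= c)%R -> (forall Q, 0 <= h Q)%R ->
  Epi (fun Q => c + h Q)%R = c%:E + Epi h.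
Proof. by move=> c0 h0; rewrite EpiD ?Epi_cst. Qed.

Lemma le_Epi h1 h2 : (forall Q, h1 Q <= h2 Q)%R -> Epi h1 <= Epi h2.
Proof. by move=> h12; apply: le_esum => Q _; rewrite lee_fin ler_wpM2l. Qed.

Lemma Epi_step f : (forall Q, 0 <= f Q)%R ->
  Epi f = Epi (fun Q => SE Q (fun a n s => f (next_state Q a n s))).
Proof.
case: Hstat => _ _ pi_inv f0.
have trans_ge0 Q Q' : (0 <= trans Amax Smax A S route Q Q')%R.
  by apply: step_exp_ge0 => *; rewrite ler0n.
have kernel Q : \esum_(Q' in [set: state N]) (trans Amax Smax A S route Q Q' * f Q')%:E
    = (SE Q (fun a n s => f (next_state Q a n s)))%:E.
  under eq_esum do rewrite /trans step_expE.
  by rewrite step_expE esum_finite_mixture // => x; exact: poutcome_ge0.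
transitivity (\esum_(Q' in [set: state N]) \esum_(Q in [set: state N])
    (pi Q)%:E * (trans Amax Smax A S route Q Q' * f Q')%:E).
  apply: eq_esum => Q' _; rewrite EFinM pi_inv muleC -ge0_esumZl //.
    by apply: eq_esum => Q _; rewrite -!EFinM mulrC mulrA.
  by move=> Q; rewrite lee_fin mulr_ge0.
rewrite exchange_esum => [|Q' Q]; last by rewrite lee_fin !mulr_ge0.
by apply: eq_esum => Q _; rewrite ge0_esumZl ?kernel // => Q'; rewrite lee_fin mulr_ge0.
Qed.

Lemma Epi_cancel h h' k1 k2 :
  (forall Q, 0 <= h Q)%R -> (forall Q, 0 <= h' Q)%R ->
  (forall Q, 0 <= k1 Q)%R -> (forall Q, 0 <= k2 Q)%R ->
  (forall Q, h Q + k1 Q = h' Q + k2 Q)%R ->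
  Epi h = Epi h' -> Epi h' \is a fin_num -> Epi k1 = Epi k2.
Proof.
move=> h0 h'0 k10 k20 hk hh' h'fin.
have /(congr1 Epi) := boolp.funext hk; rewrite !EpiD // hh'.
by move/(congr1 (fun x => x - Epi h')); rewrite !(addeC (Epi h')) !addeK.
Qed.

Hypothesis Hmom : finite_moments pi.

Lemma Epi_l1X_fin k : Epi (fun Q => (l1 Q)%:R ^+ k)%R \is a fin_num.
Proof.
rewrite ge0_fin_numE; first exact: Hmom.
by apply: Epi_ge0 => Q; rewrite exprn_ge0.
Qed.

Variable eps : R.
Hypothesis slack : mA = (mS - eps)%R.
Hypothesis eps_ge0 : (0 <= eps)%R.

Let slackE : (mS - mA)%R = eps. Proof. by rewrite slack subKr. Qed.

Lemma Epi_unused : Epi (fun Q => SE Q (unused_total Q)) = eps%:E.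
Proof.
rewrite -Epi_cst //; apply/esym.
apply: (@Epi_cancel (fun Q => SE Q (l1_next Q)) (fun Q => (l1 Q)%:R)%R).
- by move=> Q; apply: step_exp_ge0 => *; rewrite ler0n.
- by move=> Q; rewrite ler0n.
- by move=> _.
- by move=> Q; apply: step_exp_ge0 => *; rewrite ler0n.
- by move=> Q; rewrite -slackE drift_l1.
- by rewrite [RHS]Epi_step // => Q; rewrite ler0n.
- exact: (Epi_l1X_fin 1).
Qed.

Lemma stationary_balance : exists x mq u2 : R,
  [/\ mean_QU Amax Smax A S route pi = x%:E, mean_total pi = mq%:E, (0 <= x)%R,
      (0 <= u2 <= (N * Smax)%:R * eps)%R &
      (eps * mq = (pvar Amax A + nu2_sum Smax S) / 2 + (eps ^+ 2 - u2) / 2 + x)%R].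
Proof.
have -> : mean_QU Amax Smax A S route pi =
  Epi (fun Q => SE Q (fun a n s => l1_next Q a n s * unused_total Q a n s)%R) by [].
have -> : mean_total pi = Epi (fun Q => (l1 Q)%:R)%R by [].
pose U2 Q := SE Q (fun a n s => unused_total Q a n s ^+ 2)%R.
pose W Q := SE Q (fun a n s => l1_next Q a n s * unused_total Q a n s)%R.
pose K := (pvar Amax A + nu2_sum Smax S + eps ^+ 2)%R.
have q0 (Q : state N) : (0 <= (l1 Q)%:R :> R)%R by rewrite ler0n.
have U20 Q : (0 <= U2 Q)%R by apply: step_exp_ge0 => *; rewrite exprn_ge0.
have W0 Q : (0 <= W Q)%R by apply: step_exp_ge0 => *; rewrite mulr_ge0.
have WW0 Q : (0 <= W Q + W Q)%R by rewrite addr_ge0.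
have e20 : (0 <= 2 * eps)%R by rewrite mulr_ge0.
have eq0 (Q : state N) : (0 <= 2 * eps * (l1 Q)%:R)%R by rewrite mulr_ge0.
have K0 : (0 <= K)%R.
  rewrite /K !addr_ge0 ?sqr_ge0 ?pvar_ge0 //.
  by apply: sumr_ge0 => m _; exact: pvar_ge0.
have [mq Emq] : exists mq, Epi (fun Q => (l1 Q)%:R)%R = mq%:E.
  by exists (fine (Epi (fun Q => (l1 Q)%:R)%R)); rewrite fineK //; exact: (Epi_l1X_fin 1).
have U2_le : Epi U2 <= ((N * Smax)%:R * eps)%:E.
  rewrite EFinM -Epi_unused -EpiZ // => [|Q]; last first.
    by apply: step_exp_ge0 => *; rewrite ler0n.
  exact/le_Epi/step_exp_unused_sq_le.
have [u2 Eu2] : exists u2, Epi U2 = u2%:E.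
  exists (fine (Epi U2)); rewrite fineK // ge0_fin_numE ?Epi_ge0 //.
  exact: le_lt_trans U2_le (ltry _).
have balance : Epi (fun Q => 2 * eps * (l1 Q)%:R + U2 Q)%R =
               Epi (fun Q => K + (W Q + W Q))%R.
  apply: (@Epi_cancel (fun Q => SE Q (fun a n s => l1_next Q a n s ^+ 2)%R)
                      (fun Q => (l1 Q)%:R ^+ 2)%R).
  - by move=> Q; apply: step_exp_ge0 => *; rewrite exprn_ge0.
  - by move=> Q; rewrite exprn_ge0.
  - by move=> Q; rewrite addr_ge0.
  - by move=> Q; rewrite addr_ge0.
  - by move=> Q; have := drift_l1_sq Q; rewrite slackE /U2 /W /K; lra.
  - by rewrite [RHS]Epi_step // => Q; rewrite exprn_ge0.
  - exact: (Epi_l1X_fin 2).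
rewrite EpiD // EpiZ // Epi_cstD // EpiD // Emq Eu2 in balance.
have [x Ex] : exists x, Epi W = x%:E.
  exists (fine (Epi W)); rewrite fineK //.
  have : (K%:E + (Epi W + Epi W)) \is a fin_num by rewrite -balance -EFinM -EFinD.
  by rewrite !fin_numD => /and3P[].
exists x, mq, u2; split => //.
- by rewrite -lee_fin -Ex Epi_ge0.
- by rewrite -!lee_fin -Eu2 U2_le Epi_ge0.
- by move: balance; rewrite Ex -!EFinM -!EFinD => -[]; rewrite /K; lra.
Qed.

End Stationary.

End Dynamics.

Lemma cvg_dist_le (R : realType) (T : Type) (F : set_system T) {FF : Filter F}
    (g h k : T -> R) (L : R) :
  (\forall x \near F, `|h x - g x| <= k x) ->
  k x @[x --> F] --> 0 -> g x @[x --> F] --> L -> h x @[x --> F] --> L.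
Proof.
move=> hgk k0 gL.
apply: (squeeze_cvgr (f := fun x => g x - k x) (h := fun x => g x + k x)).
- by apply: filterS hgk => x; rewrite ler_distl.
- by rewrite -[L]subr0; apply: cvgB.
- by rewrite -[L]addr0; apply: cvgD.
Qed.

Lemma limf_esup_le_iff_cvg0 (R : realType) (F : set_system R) {FF : Filter F}
    (f g : R -> \bar R) (h : R -> R) (L : R) :
  (\forall e \near F, exists x, [/\ g e = x%:E, f e = (h e + x)%:E & 0 <= x]) ->
  h e @[e --> F] --> L ->
  (limf_esup f F <= L%:E)%E <-> g e @[e --> F] --> 0%E.
Proof.
move=> decomp hL.
have h_near d : 0 < d -> \forall e \near F, `|h e - L| < d.
  by move=> d0; move/cvgrPdist_lt: hL => /(_ d d0); apply: filterS => e; rewrite distrC.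
split=> [sup_le|/fine_cvgP[_ g0]].
- apply/fine_cvgP; split; first by apply: filterS decomp => e [x [-> _ _]].
  apply/cvgrPdist_lt => d d0; have d2 : 0 < d / 2 by lra.
  have /ereal_inf_lt[_ [V FV <-] supV] : (limf_esup f F < (L + d / 2)%:E)%E.
    by apply: le_lt_trans sup_le _; rewrite lte_fin; lra.
  apply: filterS3 FV decomp (h_near _ d2) => e Ve [x [ge fe x0]] he.
  have /le_lt_trans/(_ supV) : (f e <= ereal_sup (f @` V))%E.
    by apply: ereal_sup_ubound; exists e.
  rewrite fe lte_fin /= ge /= sub0r normrN ger0_norm // => fx.
  by move: he; rewrite ltr_norml; lra.
- apply/lee_addgt0Pr => d d0; have d2 : 0 < d / 2 by lra.
  have /cvgrPdist_lt/(_ _ d2) g_small := g0.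
  pose V := [set e | (f e <= (L + d)%:E)%E].
  have FV : F V.
    apply: filterS3 g_small decomp (h_near _ d2) => e ge [x [ge' fe x0]] he.
    move: ge; rewrite /= ge' /= sub0r normrN ger0_norm // => hx.
    by rewrite /V /= fe lee_fin; move: he; rewrite ltr_norml; lra.
  rewrite limf_esupE -EFinD; apply: le_trans (ereal_inf_lbound _) _.
    by exists V.
  by apply: ge_ereal_sup => _ [e Ve <-].
Qed.

Theorem lemma3 (R : realType) (N Amax Smax : nat)
  (Aeps : R -> nat -> R) (S : 'I_N -> nat -> R)
  (route : state N -> 'I_N -> R) (pi : R -> state N -> R) (sigma2 : R) :
  (0 < N)%N ->
  (forall n, is_pmf Smax (S n)) ->
  0 < mu_sum Smax S ->
  valid_routing route ->
  (forall eps, 0 < eps < mu_sum Smax S ->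
     [/\ is_pmf Amax (Aeps eps), 0 < Aeps eps 0%N
       & pmean Amax (Aeps eps) = mu_sum Smax S - eps]) ->
  (forall eps, 0 < eps < mu_sum Smax S ->
     stationary Amax Smax (Aeps eps) S route (pi eps) /\
     finite_moments (pi eps)) ->
  pvar Amax (Aeps eps) @[eps --> 0^'+] --> sigma2 ->
  ((limf_esup (fun eps : R => (eps%:E * mean_total (pi eps))%E) 0^'+
      <= ((sigma2 + nu2_sum Smax S) / 2)%:E)%E
   <->
   mean_QU Amax Smax (Aeps eps) S route (pi eps) @[eps --> 0^'+] --> 0%E).
Proof.
move=> _ Spmf mu_gt0 Hroute HA Hst Hvar.
pose C : R := (N * Smax)%:R.
pose g e := (pvar Amax (Aeps e) + nu2_sum Smax S) / 2.
have balance : \forall e \near 0^'+, exists x mq : R,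
    [/\ mean_QU Amax Smax (Aeps e) S route (pi e) = x%:E,
        mean_total (pi e) = mq%:E, 0 <= x & `|e * mq - x - g e| <= (1 + C) / 2 * e].
  near=> e.
  have e_range : 0 < e < mu_sum Smax S.
    by apply/andP; split; near: e; [exact: nbhs_right_gt|exact: nbhs_right_lt].
  have e1 : e < 1 by near: e; exact: nbhs_right_lt.
  have [Apmf _ mAe] := HA e e_range; have [Hstat Hmom] := Hst e e_range.
  have [x [mq [u2 [-> -> x0 /andP[u20 u2C] e_mq]]]] :=
    stationary_balance Apmf Spmf Hroute Hstat Hmom mAe (ltW (andP e_range).1).
  have e2 : e ^+ 2 <= e by rewrite expr2 ger_pMl ?ltW //; case/andP: e_range.
  exists x, mq; split => //; rewrite e_mq /g ler_norml.
  by apply/andP; split; nra.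
apply: (limf_esup_le_iff_cvg0
  (h := fun e => fine (e%:E * mean_total (pi e))%E
                 - fine (mean_QU Amax Smax (Aeps e) S route (pi e)))).
  apply: filterS balance => e [x [mq [-> -> x0 _]]].
  by exists x; split => //; rewrite -EFinM /=; congr EFin; ring.
apply: (cvg_dist_le (k := fun e => (1 + C) / 2 * e) (g := g)).
- by apply: filterS balance => e [x [mq [-> -> _ bound]]]; rewrite -EFinM.
- have id0 : e @[e --> (0 : R)^'+] --> (0 : R).
    by apply: cvg_at_right_filter; exact: cvg_id.
  by have := cvgMl_tmp (a := (1 + C) / 2) id0; rewrite mulr0; apply.
- by apply: cvgMr_tmp; apply: cvgD => //; exact: cvg_cst.
Unshelve. all: by end_near.
Qed.
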